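(* Under the standing assumptions of the context, with $F(h):=\alpha Lh+\alpha_p\Delta_p(h)+\nabla\psi(h)$ and $p\ge2$, for all $h,h'\in\mathbb{R}^N$, \[ \langle h-h',F(h)-F(h')\rangle\ge\mu\|h-h'\|_2^2 . \]
   Context: $G$ is a connected undirected weighted graph on $N$ nodes with symmetric weights $W_{ij}\ge0$, $W_{ii}=0$; $L=D-W$ with $D=\mathrm{diag}(\sum_jW_{ij})$; for $p\ge2$, $(\Delta_p(h))_i=\sum_jW_{ij}|h_i-h_j|^{p-2}(h_i-h_j)$. Standing assumptions: $p\in[2,\infty)$; $\alpha>0$, $\alpha_p\ge0$; $\psi:\mathbb{R}^N\to\mathbb{R}$ is $C^1$ and $\mu$-strongly convex with $\mu>0$: $\langle\nabla\psi(x)-\nabla\psi(y),x-y\rangle\ge\mu\|x-y\|_2^2$. *)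

From HB Require Import structures.
From mathcomp Require Import all_boot all_order all_algebra.
From mathcomp Require Import all_classical all_reals all_analysis.
Set Implicit Arguments. Unset Strict Implicit. Unset Printing Implicit Defensive.
Import Order.TTheory GRing.Theory Num.Theory.
Import numFieldNormedType.Exports.
Local Open Scope ring_scope.

Definition dotv (R : realType) (N : nat) (x y : 'rV[R]_N) : R :=
  \sum_(i < N) x ord0 i * y ord0 i.

Definition sqnorm2 (R : realType) (N : nat) (x : 'rV[R]_N) : R := dotv x x.

(* weighted graph Laplacian L = D - W applied to h *)
Definition laplacian (R : realType) (N : nat) (W : 'M[R]_N) (h : 'rV[R]_N)
  : 'rV[R]_N :=
  \row_i \sum_(j < N) W i j * (h ord0 i - h ord0 j).

Definition plaplacian (R : realType) (N : nat) (W : 'M[R]_N) (p : R)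
  (h : 'rV[R]_N) : 'rV[R]_N :=
  \row_i \sum_(j < N)
     W i j * (powR `|h ord0 i - h ord0 j| (p - 2)) * (h ord0 i - h ord0 j).

Definition grad (R : realType) (N : nat) (psi : 'rV[R]_N -> R) (x : 'rV[R]_N)
  : 'rV[R]_N :=
  \row_i ('d psi x (delta_mx ord0 i : 'rV[R]_N)).

Definition Fop (R : realType) (N : nat) (W : 'M[R]_N) (alpha alphap p : R)
  (psi : 'rV[R]_N -> R) (h : 'rV[R]_N) : 'rV[R]_N :=
  alpha *: laplacian W h + alphap *: plaplacian W p h + grad psi h.

Definition connected_graph (R : realType) (N : nat) (W : 'M[R]_N) : Prop :=
  forall i j : 'I_N, exists s : seq 'I_N,
    path (fun a b => 0 < W a b) i s /\ last i s = j.

From HB Require Import structures.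
From mathcomp Require Import all_boot all_order all_algebra.
From mathcomp Require Import all_classical all_reals all_analysis.
Import Order.TTheory GRing.Theory Num.Theory.
Import numFieldNormedType.Exports.
Set Implicit Arguments. Unset Strict Implicit.
Local Open Scope ring_scope.

(* Both Laplacians have the form (A_f h)_i = sum_j W_ij f(h_i - h_j) with f odd
   and nondecreasing (f = id, resp. f t = |t|^(p-2) t).  Symmetrizing the double
   sum over the symmetric weights gives, with d = h - h',
   2 <d, A_f h - A_f h'> = sum_ij W_ij (d_i - d_j) (f(h_i - h_j) - f(h'_i - h'_j)),
   and d_i - d_j is the difference of the two arguments of f, so every term is
   nonnegative.  Adding these monotone operators with nonnegative coefficients
   to the mu-strongly monotone gradient of psi keeps the constant mu. *)

Section Monotone.
Variables (R : realType) (N : nat).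

Lemma dotvD (x y z : 'rV[R]_N) : dotv x (y + z) = dotv x y + dotv x z.
Proof. by rewrite /dotv -big_split; apply: eq_bigr => i _; rewrite mxE mulrDr. Qed.

Lemma dotvZ (x y : 'rV[R]_N) a : dotv x (a *: y) = a * dotv x y.
Proof. by rewrite /dotv mulr_sumr; apply: eq_bigr => i _; rewrite mxE mulrCA. Qed.

Lemma dotvC (x y : 'rV[R]_N) : dotv x y = dotv y x.
Proof. by apply: eq_bigr => i _; rewrite mulrC. Qed.

Definition monotone_op (A : 'rV[R]_N -> 'rV[R]_N) :=
  forall h h', 0 <= dotv (h - h') (A h - A h').

Definition strongly_monotone_op (mu : R) (A : 'rV[R]_N -> 'rV[R]_N) :=
  forall h h', mu * sqnorm2 (h - h') <= dotv (h - h') (A h - A h').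

Lemma monotone_opZ (a : R) A : 0 <= a -> monotone_op A ->
  monotone_op (fun h => a *: A h).
Proof. by move=> a0 monA h h'; rewrite -scalerBr dotvZ mulr_ge0. Qed.

Lemma monotone_opD A B : monotone_op A -> monotone_op B ->
  monotone_op (fun h => A h + B h).
Proof. by move=> monA monB h h'; rewrite opprD addrACA dotvD addr_ge0. Qed.

Lemma strongly_monotone_opD mu A B : monotone_op A -> strongly_monotone_op mu B ->
  strongly_monotone_op mu (fun h => A h + B h).
Proof.
move=> monA smonB h h'; rewrite opprD addrACA dotvD -[leLHS]add0r.
exact: lerD.
Qed.

End Monotone.

Definition signed_powR (R : realType) (p t : R) := powR `|t| (p - 2) * t.

Lemma signed_powRN (R : realType) (p t : R) :
  signed_powR p (- t) = - signed_powR p t.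
Proof. by rewrite /signed_powR normrN mulrN. Qed.

Lemma signed_powR_nondecreasing (R : realType) (p : R) : 2 <= p ->
  {homo signed_powR p : x y / x <= y}.
Proof.
move=> p2 b a ba; rewrite /signed_powR.
have e0 : 0 <= p - 2 by rewrite subr_ge0.
have [a0|a0] := leP 0 a; have [b0|b0] := leP 0 b.
- rewrite !ger0_norm // ler_pM ?powR_ge0 //.
  by rewrite ge0_ler_powR ?nnegrE.
- apply: (@le_trans _ _ 0); last by rewrite mulr_ge0 ?powR_ge0.
  by rewrite mulr_ge0_le0 ?powR_ge0 // ltW.
- by have := lt_le_trans a0 (le_trans b0 ba); rewrite ltxx.
- rewrite !ltr0_norm // -lerN2 -!mulrN ler_pM ?powR_ge0 ?lerN2 //.
  + by rewrite oppr_ge0 ltW.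
  + by rewrite ge0_ler_powR ?nnegrE ?lerN2 // oppr_ge0 ltW.
Qed.

Section EdgeOperator.
Variables (R : realType) (N : nat) (W : 'M[R]_N).
Hypotheses (hWsym : forall i j, W i j = W j i) (hWnn : forall i j, 0 <= W i j).

Definition edge_op (f : R -> R) (h : 'rV[R]_N) : 'rV[R]_N :=
  \row_i \sum_(j < N) W i j * f (h ord0 i - h ord0 j).

Lemma double_sum_antisym (x : 'I_N -> R) (G : 'I_N -> 'I_N -> R) :
  (forall i j, G j i = - G i j) ->
  2 * (\sum_i x i * \sum_j W i j * G i j) =
  \sum_i \sum_j W i j * (x i - x j) * G i j.
Proof.
move=> Ganti.
have factor : \sum_i x i * \sum_j W i j * G i j =
              \sum_i \sum_j W i j * x i * G i j.
  by apply: eq_bigr => i _; rewrite mulr_sumr; apply: eq_bigr => j _;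
    rewrite mulrCA mulrA.
have swap : \sum_i \sum_j W i j * x j * G i j =
            - \sum_i \sum_j W i j * x i * G i j.
  rewrite exchange_big /= -sumrN; apply: eq_bigr => i _; rewrite -sumrN.
  by apply: eq_bigr => j _; rewrite hWsym Ganti mulrN.
have -> : \sum_i \sum_j W i j * (x i - x j) * G i j =
          \sum_i \sum_j W i j * x i * G i j - \sum_i \sum_j W i j * x j * G i j.
  rewrite -sumrB; apply: eq_bigr => i _; rewrite -sumrB; apply: eq_bigr => j _.
  by rewrite mulrBr mulrBl.
by rewrite factor swap opprK mulr_natl mulr2n.
Qed.

Lemma nondecreasing_subr_mul_ge0 (f : R -> R) a b :
  {homo f : x y / x <= y} -> 0 <= (a - b) * (f a - f b).
Proof.
move=> fnd; have [ba|ab] := leP b a.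
  by rewrite mulr_ge0 // subr_ge0 // fnd.
by rewrite -mulrNN !opprB mulr_ge0 // subr_ge0 ?fnd // ltW.
Qed.

Lemma edge_op_monotone (f : R -> R) :
  (forall t, f (- t) = - f t) -> {homo f : x y / x <= y} ->
  monotone_op (edge_op f).
Proof.
move=> fodd fnd h h'.
set G := fun i j => f (h ord0 i - h ord0 j) - f (h' ord0 i - h' ord0 j).
have -> : dotv (h - h') (edge_op f h - edge_op f h') =
          \sum_i (h - h') ord0 i * \sum_j W i j * G i j.
  apply: eq_bigr => i _; rewrite !mxE -sumrB.
  by congr (_ * _); apply: eq_bigr => j _; rewrite mulrBr.
have Ganti i j : G j i = - G i j.
  by rewrite /G -(opprB (h ord0 i)) -(opprB (h' ord0 i)) !fodd opprB addrC opprK.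
rewrite -(pmulr_rge0 _ (ltr0n R 2)) double_sum_antisym //.
apply: sumr_ge0 => i _; apply: sumr_ge0 => j _; rewrite -mulrA mulr_ge0 //.
have -> : (h - h') ord0 i - (h - h') ord0 j =
          (h ord0 i - h ord0 j) - (h' ord0 i - h' ord0 j).
  by rewrite !mxE !opprB addrACA [RHS]addrACA (addrC (- h ord0 j)).
exact: nondecreasing_subr_mul_ge0.
Qed.

Lemma laplacian_monotone : monotone_op (laplacian W).
Proof. exact: (@edge_op_monotone id). Qed.

Lemma plaplacian_monotone p : 2 <= p -> monotone_op (plaplacian W p).
Proof.
move=> p2; have -> : plaplacian W p = edge_op (signed_powR p).
  by apply/funext => h; apply/rowP => i; rewrite !mxE;
    apply: eq_bigr => j _; rewrite mulrA.
exact/edge_op_monotone/signed_powR_nondecreasing/p2/signed_powRN.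
Qed.

End EdgeOperator.

Theorem mainTheorem12 (R : realType) (N : nat) (W : 'M[R]_N)
  (alpha alphap p mu : R) (psi : 'rV[R]_N -> R)
  (hWsym : forall i j, W i j = W j i)
  (hWnn : forall i j, 0 <= W i j)
  (hWdiag : forall i, W i i = 0)
  (hconn : connected_graph W)
  (hp : 2 <= p) (halpha : 0 < alpha) (halphap : 0 <= alphap)
  (hdiff : forall x, differentiable psi x)
  (hC1 : continuous (grad psi))
  (hmu : 0 < mu)
  (hconv : forall x y, dotv (grad psi x - grad psi y) (x - y)
                        >= mu * sqnorm2 (x - y)) :
  forall h h' : 'rV[R]_N,
    dotv (h - h') (Fop W alpha alphap p psi h - Fop W alpha alphap p psi h')
      >= mu * sqnorm2 (h - h').
Proof.
have smon_grad : strongly_monotone_op mu (grad psi).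
  by move=> h h'; rewrite dotvC.
apply: strongly_monotone_opD smon_grad.
apply: monotone_opD; apply: monotone_opZ.
- exact: ltW.
- exact: laplacian_monotone.
- exact: halphap.
- exact: plaplacian_monotone.
Qed.
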